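(* Let $m\geq 2$ and let $\mathbf d=(d_1,d_2)$ be a nonzero pair of non-negative integers with $\langle\mathbf d,\mathbf d\rangle=d_1^2+d_2^2-md_1d_2\leq 0$ (so $d_1,d_2\geq1$). For $x\in[0,d_1]$ define $$c_{\mathbf d}(x)=\Bigl(mx+d_2-\sqrt{(mx-d_2)^2+4x(d_1-x)}\Bigr)/2.$$ Then for all $x\in[0,d_1]$ we have $\frac{d_2}{d_1}\,x\leq c_{\mathbf d}(x)\leq\min(mx,d_2)$.
   Context: The Euler form of $K(m)$ (two vertices, $m$ arrows from vertex $1$ to vertex $2$) is extended to $\mathbb R^2$ by $\langle(a_1,a_2),(b_1,b_2)\rangle=a_1b_1+a_2b_2-ma_1b_2$. For fixed $x\in[0,d_1]$, $c_{\mathbf d}(x)$ is the smaller of the two zeroes of the quadratic function $y\mapsto\langle(x,y),(d_1-x,d_2-y)\rangle$. *)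

From Stdlib Require Import Reals Lra Lia.
Open Scope R_scope.

(* Euler form of the Kronecker quiver K(m), extended to R^2:
   <(a1,a2),(b1,b2)> = a1 b1 + a2 b2 - m a1 b2. *)
Definition euler_form (m : nat) (a1 a2 b1 b2 : R) : R :=
  a1 * b1 + a2 * b2 - INR m * a1 * b2.

Definition c_d (m d1 d2 : nat) (x : R) : R :=
  (INR m * x + INR d2
   - sqrt ((INR m * x - INR d2) ^ 2 + 4 * x * (INR d1 - x))) / 2.

(* The upper bound holds because the discriminant dominates (m x - d2)^2.  For
   the lower bound, c_d(x) >= (d2/d1) x amounts to sqrt S <= l(x) for the
   discriminant S and the affine function l(x) = m x + d2 - 2 (d2/d1) x, whose
   square agrees with S at x = 0 and x = d1; in between
   d1^2 (l(x)^2 - S) = 4 x (d1 - x) (m d1 d2 - d1^2 - d2^2) >= 0,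
   which is exactly where <d,d> <= 0 enters. *)
From Stdlib Require Import Reals Lra.
Open Scope R_scope.

Lemma Rabs_le_sqrt (u S : R) : u ^ 2 <= S -> Rabs u <= sqrt S.
Proof.
  intros Hu.
  rewrite <- (sqrt_pow2 (Rabs u)) by apply Rabs_pos.
  apply sqrt_le_1_alt. rewrite <- Rsqr_pow2, <- Rsqr_abs, Rsqr_pow2. exact Hu.
Qed.

Lemma sqrt_le_of_le_pow2 (S l : R) : 0 <= l -> S <= l ^ 2 -> sqrt S <= l.
Proof.
  intros Hl HS. rewrite <- (sqrt_pow2 l Hl). now apply sqrt_le_1_alt.
Qed.

Lemma pos_pair_of_euler_form_nonpos (M a b : R) :
  0 <= a -> 0 <= b -> (a, b) <> (0, 0) -> a * a + b * b - M * a * b <= 0 ->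
  0 < a /\ 0 < b.
Proof.
  intros Ha Hb Hab HE.
  destruct (Req_dec a 0) as [Ea | Ea]; destruct (Req_dec b 0) as [Eb | Eb].
  - now subst.
  - subst a. nra.
  - subst b. nra.
  - lra.
Qed.

Section SmallerRoot.

Variables M a b : R.

Definition kronecker_disc (x : R) : R := (M * x - b) ^ 2 + 4 * x * (a - x).

Definition c_real (x : R) : R := (M * x + b - sqrt (kronecker_disc x)) / 2.

Lemma c_real_le_min (x : R) : 0 <= x <= a -> c_real x <= Rmin (M * x) b.
Proof.
  intros Hx.
  assert (Hgap : Rabs (M * x - b) <= sqrt (kronecker_disc x)).
  { apply Rabs_le_sqrt. unfold kronecker_disc. nra. }
  pose proof (Rle_abs (M * x - b)).
  pose proof (Rle_abs (b - M * x)) as Hsym. rewrite Rabs_minus_sym in Hsym.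
  unfold c_real. apply Rmin_glb; lra.
Qed.

Hypothesis a_pos : 0 < a.
Hypothesis b_pos : 0 < b.
Hypothesis euler_nonpos : a * a + b * b - M * a * b <= 0.

Let chord (x : R) : R := M * x + b - 2 * (b / a) * x.

Lemma chord_nonneg (x : R) : 0 <= x <= a -> 0 <= chord x.
Proof.
  intros Hx.
  assert (E : a * b * chord x
              = x * (M * a * b - a * a - b * b) + b * b * (a - x) + a * a * x).
  { unfold chord. field. lra. }
  assert (0 <= a * b * chord x).
  { rewrite E. assert (0 <= x * (M * a * b - a * a - b * b)) by nra. nra. }
  assert (0 < a * b) by nra. nra.
Qed.

Lemma chord_sqr_sub_disc (x : R) :
  a ^ 2 * (chord x ^ 2 - kronecker_disc x)
  = 4 * x * (a - x) * (M * a * b - a * a - b * b).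
Proof. unfold chord, kronecker_disc. field. lra. Qed.

Lemma disc_le_chord_sqr (x : R) : 0 <= x <= a -> kronecker_disc x <= chord x ^ 2.
Proof.
  intros Hx.
  assert (0 <= a ^ 2 * (chord x ^ 2 - kronecker_disc x)).
  { rewrite chord_sqr_sub_disc.
    assert (0 <= x * (a - x)) by nra. nra. }
  assert (0 < a ^ 2) by nra. nra.
Qed.

Lemma le_c_real (x : R) : 0 <= x <= a -> b / a * x <= c_real x.
Proof.
  intros Hx.
  pose proof (sqrt_le_of_le_pow2 _ _ (chord_nonneg x Hx) (disc_le_chord_sqr x Hx)).
  unfold c_real, chord in *. lra.
Qed.

End SmallerRoot.

Theorem lemma3p2 (m d1 d2 : nat) :
  (2 <= m)%nat ->
  (d1, d2) <> (0%nat, 0%nat) ->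
  euler_form m (INR d1) (INR d2) (INR d1) (INR d2) <= 0 ->
  forall x : R, 0 <= x <= INR d1 ->
    INR d2 / INR d1 * x <= c_d m d1 d2 x /\
    c_d m d1 d2 x <= Rmin (INR m * x) (INR d2).
Proof.
  intros _ Hd He x Hx.
  change (c_d m d1 d2 x) with (c_real (INR m) (INR d1) (INR d2) x).
  assert (Hpair : (INR d1, INR d2) <> (0, 0)).
  { intros E. injection E as E1 E2. apply Hd.
    now rewrite (INR_eq d1 0 E1), (INR_eq d2 0 E2). }
  destruct (pos_pair_of_euler_form_nonpos (INR m) (INR d1) (INR d2)
              (pos_INR d1) (pos_INR d2) Hpair He) as [Hd1 Hd2].
  split.
  - now apply le_c_real.
  - now apply c_real_le_min.
Qed.
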